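(* Let $N\ge 1$. For each instance $i\in\{1,\dots,N\}$ let $r_i\in\{0,1\}$ be a binary label and $y_i\in\mathbb{R}$ a current prediction, and put $\psi_i=\frac{e^{y_i}}{e^{y_i}+e^{-y_i}}$. Let the logistic loss be $\ell(y_i)=-r_i\ln\psi_i-(1-r_i)\ln(1-\psi_i)$, with first and second derivatives $g_i=\ell'(y_i)=2(\psi_i-r_i)$ and $h_i=\ell''(y_i)=4\psi_i(1-\psi_i)>0$. Let $p_i\in(0,1]$ and $q_i\in\{0,1\}$ for each $i$, and let $\mathbf{Q}=\mathrm{diag}\left(\frac{q_1}{p_1},\dots,\frac{q_N}{p_N}\right)$, $\mathbf{H}=\mathrm{diag}(h_1,\dots,h_N)$, $\mathbf{g}=(g_1,\dots,g_N)^\top$. Then, with $(\mathbf{H}\mathbf{Q})^{-1}$ understood as the inverse on the sampled coordinates $\{i: q_i=1\}$ (i.e. the Moore--Penrose pseudo-inverse of the diagonal matrix $\mathbf{H}\mathbf{Q}$), $$\mathbf{g}^\top\mathbf{Q}(\mathbf{H}\mathbf{Q})^{+}\mathbf{Q}\mathbf{g}=\sum_{i:\,q_i=1}\frac{\left(\frac{q_ig_i}{p_i}\right)^2}{\frac{q_ih_i}{p_i}}\;\ge\;\sum_{i=1}^N\frac{q_i}{p_i}\,\ell(y_i).$$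
   Context: This is the setting of gradient tree boosting with logistic loss (LogitBoost) combined with importance sampling: on each boosting iteration, instance $i$ is included in the subsample independently with probability $p_i$, and $q_i\in\{0,1\}$ is the indicator that it was sampled. The importance-balanced (reweighted) loss is $L(\mathbf{y})=\sum_i \frac{q_i}{p_i}\ell(y_i)$. *)

From HB Require Import structures.
From mathcomp Require Import all_boot all_order all_algebra.
From mathcomp Require Import all_classical all_reals all_analysis.
Set Implicit Arguments. Unset Strict Implicit. Unset Printing Implicit Defensive.
Import Order.TTheory GRing.Theory Num.Theory.
Local Open Scope ring_scope.

Section LogitDefs.
Variable R : realType.

Definition psi (y : R) : R := expR y / (expR y + expR (- y)).

Definition logloss (r y : R) : R :=
  - r * ln (psi y) - (1 - r) * ln (1 - psi y).

Definition lgrad (r y : R) : R := 2 * (psi y - r).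

Definition lhess (y : R) : R := 4 * psi y * (1 - psi y).

Definition pinv_diag (n : nat) (A : 'M[R]_n) : 'M[R]_n :=
  diag_mx (\row_i (if A i i == 0 then 0 else (A i i)^-1)).

End LogitDefs.

From HB Require Import structures.
From mathcomp Require Import all_boot all_order all_algebra.
From mathcomp Require Import all_classical all_reals all_analysis.
From mathcomp Require Import ring lra.
Import Order.TTheory GRing.Theory Num.Theory.
Local Open Scope ring_scope.

(* Since Q and H are diagonal, the quadratic form is a sum over the sampled
   coordinates of (w g)^2 / (w h) = w (g^2 / h) with w = q/p.  Per instance,
   g^2 / h equals 1/psi - 1 when r = 1 and 1/(1 - psi) - 1 when r = 0, while
   the loss is -ln psi, resp. -ln (1 - psi); so the inequality is ln t <= t - 1
   at t = 1/psi, resp. t = 1/(1 - psi). *)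

Lemma quad_form_pinv_diag (R : realType) n (a b u : 'I_n -> R) :
  ((\col_i u i)^T *m diag_mx (\row_i a i) *m pinv_diag (diag_mx (\row_i b i))
     *m diag_mx (\row_i a i) *m \col_i u i) 0 0
  = \sum_(i | b i != 0) (a i * u i) ^+ 2 / b i.
Proof.
rewrite /pinv_diag !mul_mx_diag mxE [RHS]big_mkcond /=.
apply: eq_bigr => i _; rewrite !mxE eqxx mulr1n.
by case: ifP => _; rewrite ?mulr0 ?mul0r //; ring.
Qed.

Section LogisticLoss.
Variable R : realType.
Implicit Types r y w s : R.

Lemma psi_gt0 y : 0 < psi y.
Proof. by rewrite divr_gt0 ?addr_gt0 ?expR_gt0. Qed.

Lemma psi_lt1 y : psi y < 1.
Proof. by rewrite ltr_pdivrMr ?addr_gt0 ?expR_gt0 // mul1r ltrDl expR_gt0. Qed.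

Lemma lhess_gt0 y : 0 < lhess y.
Proof. by rewrite /lhess mulr_gt0 ?subr_gt0 ?psi_lt1 // mulr_gt0 ?psi_gt0. Qed.

Lemma oppr_ln_le [s] : 0 < s -> - ln s <= s^-1 - 1.
Proof.
move=> s_gt0; have sV_gt0 : 0 < s^-1 by rewrite invr_gt0.
rewrite -lnV ?posrE // -[X in ln X](addrNK 1) addrC.
by apply: le_ln1Dx; lra.
Qed.

Lemma logloss_le_sqr_lgrad_div_lhess r y :
  r = 0 \/ r = 1 -> logloss r y <= lgrad r y ^+ 2 / lhess y.
Proof.
rewrite /logloss /lgrad /lhess; set s := psi y.
have s_gt0 : 0 < s := psi_gt0 y.
have s'_gt0 : 0 < 1 - s by rewrite subr_gt0 psi_lt1.
have lnP := oppr_ln_le s_gt0; have lnN := oppr_ln_le s'_gt0.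
case=> ->.
- have -> : (2 * (s - 0)) ^+ 2 / (4 * s * (1 - s)) = (1 - s)^-1 - 1.
    by field; rewrite ?gt_eqF //; lra.
  lra.
- have -> : (2 * (s - 1)) ^+ 2 / (4 * s * (1 - s)) = s^-1 - 1.
    by field; rewrite ?gt_eqF //; lra.
  lra.
Qed.

Lemma weighted_logloss_le r y w : r = 0 \/ r = 1 -> 0 < w ->
  w * logloss r y <= (w * lgrad r y) ^+ 2 / (w * lhess y).
Proof.
move=> r01 w_gt0.
have -> : (w * lgrad r y) ^+ 2 / (w * lhess y) = w * (lgrad r y ^+ 2 / lhess y).
  by field; rewrite ?gt_eqF ?lhess_gt0.
by rewrite ler_pM2l // logloss_le_sqr_lgrad_div_lhess.
Qed.

End LogisticLoss.

Theorem lemma3 (R : realType) (N : nat) (hN : (0 < N)%N)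
  (r y p q : 'I_N -> R)
  (hr : forall i, r i = 0 \/ r i = 1)
  (hp : forall i, 0 < p i <= 1)
  (hq : forall i, q i = 0 \/ q i = 1) :
  let g : 'cV[R]_N := \col_i lgrad (r i) (y i) in
  let Q : 'M[R]_N := diag_mx (\row_i (q i / p i)) in
  let H : 'M[R]_N := diag_mx (\row_i lhess (y i)) in
  let mid := \sum_(i < N | q i == 1)
               (q i * lgrad (r i) (y i) / p i) ^+ 2 / (q i * lhess (y i) / p i) in
  (g^T *m Q *m pinv_diag (H *m Q) *m Q *m g) ord0 ord0 = mid /\
  \sum_(i < N) q i / p i * logloss (r i) (y i) <= mid.
Proof.
move=> g Q H mid.
have p_gt0 i : 0 < p i by case/andP: (hp i).
have HQ : H *m Q = diag_mx (\row_i (q i / p i * lhess (y i))).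
  by rewrite diag_mxC mulmx_diag; congr diag_mx; apply/rowP => i; rewrite !mxE.
have mid_weighted : mid = \sum_(i | q i == 1)
    (q i / p i * lgrad (r i) (y i)) ^+ 2 / (q i / p i * lhess (y i)).
  by apply: eq_bigr => i _; rewrite (mulrAC (q i) (lgrad _ _)) (mulrAC (q i) (lhess _)).
have sampledE i : (q i / p i * lhess (y i) != 0) = (q i == 1).
  case: (hq i) => ->; first by rewrite !mul0r eqxx eq_sym oner_eq0.
  by rewrite eqxx mul1r mulf_neq0 ?invr_eq0 ?gt_eqF ?lhess_gt0.
split.
  by rewrite HQ quad_form_pinv_diag mid_weighted; apply: eq_bigl => i.
rewrite mid_weighted [X in _ <= X]big_mkcond /=; apply: ler_sum => i _.
case: (hq i) => ->; first by rewrite !mul0r (eq_sym 0) oner_eq0.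
by rewrite eqxx; apply: weighted_logloss_le; rewrite ?mul1r ?invr_gt0.
Qed.
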